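(* The family of curves $\tanh\xi = \tan\eta\,\tan 2t$, $0<t<\frac\pi4$, where $\xi=x+y$ and $\eta=x-y$, is a solution to the mean curvature flow in the Minkowski plane $\mathbf R^{1,1}$.
   Context: $\mathbf R^{1,1}$ is $\mathbf R^2$ with $\langle (x_1,y_1),(x_2,y_2)\rangle = x_1x_2-y_1y_2$. For a space-like curve (tangent $v$ with $\langle v,v\rangle>0$), with Minkowski arc-length $s$, $T=X_s$, $N$ the reflection of $T$ across $y=x$, and $T_s=kN$, mean curvature flow means $\langle\partial_tX,N\rangle=-k$; equivalently, writing the curve as $\xi=\xi(\eta,t)$ with $\xi_\eta>0$, $\xi_t=\xi_{\eta\eta}/\xi_\eta$. *)

From Stdlib Require Export Reals.
From Coquelicot Require Export Coquelicot.
Open Scope R_scope.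

(* The domain of the family: 0 < t < pi/4, and eta such that tan eta is
   defined and |tan eta * tan 2t| < 1, so that tanh xi = tan eta tan 2t
   has a (unique) real solution xi. *)
Definition in_domain (eta t : R) : Prop :=
  0 < t < PI / 4 /\ cos eta <> 0 /\ Rabs (tan eta * tan (2 * t)) < 1.

(* Graph form of (Minkowski) mean curvature flow for a space-like curve
   written as xi = xi(eta, t):  xi_eta > 0 and xi_t = xi_{eta eta} / xi_eta. *)
Definition mcf_graph_at (xi : R -> R -> R) (eta t : R) : Prop :=
  ex_derive (fun e => xi e t) eta /\
  ex_derive (fun s => xi eta s) t /\
  ex_derive (fun e => Derive (fun e' => xi e' t) e) eta /\
  0 < Derive (fun e => xi e t) eta /\
  Derive (fun s => xi eta s) t =
    Derive_n (fun e => xi e t) 2 eta / Derive (fun e => xi e t) eta.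

From Stdlib Require Import Reals Lra.
From Coquelicot Require Import Coquelicot.
Open Scope R_scope.

(* Solving the implicit relation gives xi = artanh (T S) with T = tan eta and
   S = tan 2t, where dT/deta = 1 + T^2 and dS/dt = 2 (1 + S^2).  Hence
     xi_eta     = (1 + T^2) S / (1 - T^2 S^2),
     xi_t       = 2 (1 + S^2) T / (1 - T^2 S^2),
     xi_etaeta  = 2 T S (1 + T^2) (1 + S^2) / (1 - T^2 S^2)^2,
   so xi_etaeta / xi_eta = xi_t, and xi_eta > 0 because S > 0 and |T S| < 1.
   The flow equation only involves xi near (eta, t) along the two coordinate
   lines, and the domain is open in each variable, so any xi satisfying the
   relation agrees there with the explicit solution. *)

Definition artanh (u : R) : R := ln ((1 + u) / (1 - u)) / 2.

Lemma artanh_tanh x : artanh (tanh x) = x.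
Proof.
  unfold artanh, tanh, sinh, cosh. rewrite exp_Ropp.
  assert (Hexp : 0 < exp x) by apply exp_pos.
  replace ((1 + _) / (1 - _)) with (exp (x + x)).
  - rewrite ln_exp. field.
  - rewrite exp_plus. field. split; nra.
Qed.

Lemma is_derive_artanh u : Rabs u < 1 -> is_derive artanh u (/ (1 - u ^ 2)).
Proof.
  intros Hu. apply Rabs_def2 in Hu. destruct Hu.
  unfold artanh. auto_derive.
  - repeat split; try lra. apply Rdiv_lt_0_compat; lra.
  - field. repeat split; nra.
Qed.

Lemma is_derive_comp_tan (g : R -> R) x dg :
  cos x <> 0 -> is_derive g (tan x) dg ->
  is_derive (fun y => g (tan y)) x ((tan x ^ 2 + 1) * dg).
Proof. intros Hc Hg. exact (is_derive_comp g tan x dg _ Hg (is_derive_tan x Hc)). Qed.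

Lemma locally_continuous_open (f : R -> R) (P : R -> Prop) x :
  continuous f x -> open P -> P (f x) -> locally x (fun y => P (f y)).
Proof. intros Hf HP Hx. exact (Hf P (HP _ Hx)). Qed.

Lemma open_Rabs_lt_1 : open (fun u => Rabs u < 1).
Proof.
  apply (open_ext (fun u => -1 < u /\ u < 1)).
  - intros u. split; intros Hu; [apply Rabs_def1 | apply Rabs_def2 in Hu]; lra.
  - apply open_and; [apply open_gt | apply open_lt].
Qed.

Lemma mcf_graph_at_ext_loc (f g : R -> R -> R) eta t :
  locally eta (fun e => f e t = g e t) ->
  locally t (fun s => f eta s = g eta s) ->
  mcf_graph_at f eta t -> mcf_graph_at g eta t.
Proof.
  intros He Ht (Dfe & Dft & Dfee & Hpos & Hflow).
  assert (HDe : locally eta (fun e => Derive (fun e' => f e' t) e = Derive (fun e' => g e' t) e)).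
  { apply filter_imp with (2 := locally_locally _ _ He). intros e. apply Derive_ext_loc. }
  assert (E1 : Derive (fun e => f e t) eta = Derive (fun e => g e t) eta)
    by exact (Derive_ext_loc _ _ _ He).
  assert (E2 : Derive (fun s => f eta s) t = Derive (fun s => g eta s) t)
    by exact (Derive_ext_loc _ _ _ Ht).
  assert (E3 : Derive_n (fun e => f e t) 2 eta = Derive_n (fun e => g e t) 2 eta)
    by exact (Derive_n_ext_loc _ _ 2 _ He).
  unfold mcf_graph_at. rewrite <- E1, <- E2, <- E3.
  repeat split; try assumption.
  - exact (ex_derive_ext_loc _ _ _ He Dfe).
  - exact (ex_derive_ext_loc _ _ _ Ht Dft).
  - exact (ex_derive_ext_loc _ _ _ HDe Dfee).
Qed.

Definition xi_sol (e s : R) : R := artanh (tan e * tan (2 * s)).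

Lemma in_domain_facts e s : in_domain e s ->
  cos e <> 0 /\ cos (2 * s) <> 0 /\ 0 < tan (2 * s) /\ Rabs (tan e * tan (2 * s)) < 1.
Proof.
  intros [Hs [Hc Hu]].
  assert (0 < cos (2 * s)) by (apply cos_gt_0; lra).
  repeat split; try lra; try assumption.
  apply tan_gt_0; lra.
Qed.

Lemma locally_in_domain_eta eta t : in_domain eta t -> locally eta (fun e => in_domain e t).
Proof.
  intros Hd. destruct (in_domain_facts _ _ Hd) as (Hc & _ & _ & Hu).
  assert (Lc : locally eta (fun e => cos e <> 0)).
  { apply (locally_continuous_open cos (fun u => u <> 0)); [apply continuous_cos|apply open_neq|assumption]. }
  assert (Lu : locally eta (fun e => Rabs (tan e * tan (2 * t)) < 1)).
  { apply (locally_continuous_open (fun e => tan e * tan (2 * t)) (fun u => Rabs u < 1));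
      [|apply open_Rabs_lt_1|assumption].
    apply (continuous_mult tan (fun _ => tan (2 * t))).
    - now apply continuous_tan.
    - apply continuous_const. }
  apply filter_imp with (2 := filter_and _ _ Lc Lu). intros e Hce. split; [apply Hd | exact Hce].
Qed.

Lemma locally_in_domain_t eta t : in_domain eta t -> locally t (fun s => in_domain eta s).
Proof.
  intros Hd. destruct (in_domain_facts _ _ Hd) as (_ & Hc2 & _ & Hu).
  assert (Lt : locally t (fun s => 0 < s < PI / 4)).
  { apply (locally_continuous_open (fun s => s) (fun s => 0 < s < PI / 4));
      [apply continuous_id | apply open_and; [apply open_gt | apply open_lt] | apply Hd]. }
  assert (Lu : locally t (fun s => Rabs (tan eta * tan (2 * s)) < 1)).
  { apply (locally_continuous_open (fun s => tan eta * tan (2 * s)) (fun u => Rabs u < 1));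
      [|apply open_Rabs_lt_1|assumption].
    apply (continuous_mult (fun _ => tan eta) (fun s => tan (2 * s))); [apply continuous_const|].
    apply (continuous_comp (fun s => 2 * s) tan); [|now apply continuous_tan].
    apply (continuous_mult (fun _ => 2) (fun s => s)); [apply continuous_const|apply continuous_id]. }
  apply filter_imp with (2 := filter_and _ _ Lt Lu). intros s [Hs Hus]. split; [|split]; [exact Hs|apply Hd|exact Hus].
Qed.

Definition xi_sol_eta (e s : R) : R :=
  (tan e ^ 2 + 1) * tan (2 * s) / (1 - (tan e * tan (2 * s)) ^ 2).

Lemma is_derive_xi_sol_eta e s :
  cos e <> 0 -> Rabs (tan e * tan (2 * s)) < 1 ->
  is_derive (fun e => xi_sol e s) e (xi_sol_eta e s).
Proof.
  intros Hc Hu. unfold xi_sol, xi_sol_eta, Rdiv. rewrite Rmult_assoc.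
  apply (is_derive_comp_tan (fun T => artanh (T * tan (2 * s)))); [exact Hc|].
  apply (is_derive_comp artanh (fun T => T * tan (2 * s))); [now apply is_derive_artanh|].
  auto_derive; [constructor | ring].
Qed.

Lemma is_derive_xi_sol_t e s :
  cos (2 * s) <> 0 -> Rabs (tan e * tan (2 * s)) < 1 ->
  is_derive (fun s => xi_sol e s) s
    (2 * (tan (2 * s) ^ 2 + 1) * tan e / (1 - (tan e * tan (2 * s)) ^ 2)).
Proof.
  intros Hc Hu. unfold xi_sol, Rdiv. rewrite !Rmult_assoc.
  apply (is_derive_comp (fun u => artanh (tan e * tan u)) (fun s => 2 * s));
    [|auto_derive; [constructor | ring]].
  apply (is_derive_comp_tan (fun S => artanh (tan e * S))); [exact Hc|].
  apply (is_derive_comp artanh (fun S => tan e * S)); [now apply is_derive_artanh|].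
  auto_derive; [constructor | ring].
Qed.

Lemma is_derive_xi_sol_eta_eta e s :
  cos e <> 0 -> Rabs (tan e * tan (2 * s)) < 1 ->
  is_derive (fun e => xi_sol_eta e s) e
    (2 * tan e * tan (2 * s) * (tan e ^ 2 + 1) * (tan (2 * s) ^ 2 + 1)
       / (1 - (tan e * tan (2 * s)) ^ 2) ^ 2).
Proof.
  intros Hc Hu. unfold xi_sol_eta. set (S := tan (2 * s)) in *.
  assert (Hq : 0 < 1 - (tan e * S) ^ 2) by (apply Rabs_def2 in Hu; nra).
  replace (2 * _ * S * _ * _ / _) with
    ((tan e ^ 2 + 1) * (2 * tan e * S * (S ^ 2 + 1) / (1 - (tan e * S) ^ 2) ^ 2)) by (unfold Rdiv; ring).
  apply (is_derive_comp_tan (fun T => (T ^ 2 + 1) * S / (1 - (T * S) ^ 2))); [exact Hc|].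
  auto_derive.
  - nra.
  - field. lra.
Qed.

Lemma mcf_graph_at_xi_sol eta t : in_domain eta t -> mcf_graph_at xi_sol eta t.
Proof.
  intros Hd. destruct (in_domain_facts _ _ Hd) as (Hc & Hc2 & HS & Hu).
  assert (Hq : 0 < 1 - (tan eta * tan (2 * t)) ^ 2) by (apply Rabs_def2 in Hu; nra).
  pose proof (is_derive_xi_sol_eta _ _ Hc Hu) as De.
  pose proof (is_derive_xi_sol_t _ _ Hc2 Hu) as Dt.
  assert (Dee := is_derive_xi_sol_eta_eta _ _ Hc Hu).
  apply (is_derive_ext_loc _ (fun e => Derive (fun e' => xi_sol e' t) e)) in Dee.
  2:{ apply filter_imp with (2 := locally_in_domain_eta _ _ Hd). intros e He.
      destruct (in_domain_facts _ _ He) as (Hce & _ & _ & Hue).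
      symmetry. apply is_derive_unique, is_derive_xi_sol_eta; assumption. }
  assert (E1 : Derive (fun e => xi_sol e t) eta = xi_sol_eta eta t)
    by exact (is_derive_unique _ _ _ De).
  assert (E2 : Derive (fun s => xi_sol eta s) t
               = 2 * (tan (2 * t) ^ 2 + 1) * tan eta / (1 - (tan eta * tan (2 * t)) ^ 2))
    by exact (is_derive_unique _ _ _ Dt).
  assert (E3 : Derive_n (fun e => xi_sol e t) 2 eta
               = 2 * tan eta * tan (2 * t) * (tan eta ^ 2 + 1) * (tan (2 * t) ^ 2 + 1)
                 / (1 - (tan eta * tan (2 * t)) ^ 2) ^ 2)
    by exact (is_derive_unique _ _ _ Dee).
  unfold mcf_graph_at. rewrite E1, E2, E3.
  repeat split; [eexists; eassumption .. | |].
  - unfold xi_sol_eta. apply Rdiv_lt_0_compat; [nra | exact Hq].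
  - unfold xi_sol_eta. field. repeat split; nra.
Qed.

Theorem theorem11p2 :
  forall xi : R -> R -> R,
    (forall eta t, in_domain eta t ->
       tanh (xi eta t) = tan eta * tan (2 * t)) ->
    forall eta t, in_domain eta t -> mcf_graph_at xi eta t.
Proof.
  intros xi Hxi eta t Hd.
  apply (mcf_graph_at_ext_loc xi_sol); [| | now apply mcf_graph_at_xi_sol].
  - apply filter_imp with (2 := locally_in_domain_eta _ _ Hd). intros e He.
    unfold xi_sol. now rewrite <- (Hxi e t He), artanh_tanh.
  - apply filter_imp with (2 := locally_in_domain_t _ _ Hd). intros s Hs.
    unfold xi_sol. now rewrite <- (Hxi eta s Hs), artanh_tanh.
Qed.
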